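(* Let $\Sigma\subset\mathbb{R}^d$ be an open set with coordinates $\xi^a$, $M\subset\mathbb{R}^D$ open with coordinates $X^\mu$, $V$ a smooth volume metric on $M$, and $X:\Sigma\to M$ a smooth map with $\gamma_v>0$ on $\Sigma$. Let $F$ be a $C^2$ function on $(0,\infty)$. If $X$ satisfies the Euler–Lagrange equations of the action $S=\int_\Sigma d^d\xi\,F(\gamma_v)$, i.e. $$\frac{\partial F(\gamma_v)}{\partial X^\alpha}-\partial_a\frac{\partial F(\gamma_v)}{\partial(\partial_aX^\alpha)}=0\quad(\alpha=1,\dots,D),$$ then for every $b=1,\dots,d$, $$\left(\partial_b\gamma_v\right)\left(2\gamma_v\,F''(\gamma_v)+F'(\gamma_v)\right)=0\quad\text{on }\Sigma.$$
   Context: A volume metric (of degree $d$) on $M$ is a smooth field of components $V_{[\mu_1\cdots\mu_d][\nu_1\cdots\nu_d]}(X)$ that is totally antisymmetric within each of the two $d$-tuples of indices and symmetric under exchange of the two $d$-tuples. Given $X:\Sigma\to M$, define $\sigma^{\mu_1\cdots\mu_d}=\epsilon^{a_1\cdots a_d}\partial_{a_1}X^{\mu_1}\cdots\partial_{a_d}X^{\mu_d}$ (with $\epsilon$ the $d$-dimensional Levi-Civita symbol) and $\gamma_v=V_{[\mu_1\cdots\mu_d][\nu_1\cdots\nu_d]}(X)\,\sigma^{\mu_1\cdots\mu_d}\sigma^{\nu_1\cdots\nu_d}$. Special cases: for a Riemannian metric $g$, $V=\frac{1}{d!}g_{\mu_1\nu_1}\cdots g_{\mu_d\nu_d}$ gives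 $\gamma_v=\det(g_{\mu\nu}\partial_aX^\mu\partial_bX^\nu)$; for $d=2$ and an areal metric $G_{\mu\nu\rho\lambda}$, $V=\frac14G$ gives $\gamma_v=\frac14G_{\mu\nu\rho\lambda}\sigma^{\mu\nu}\sigma^{\rho\lambda}$. *)

From HB Require Import structures.
From mathcomp Require Import all_boot all_order all_algebra all_fingroup.
From mathcomp Require Import all_classical all_reals all_analysis.
Set Implicit Arguments. Unset Strict Implicit. Unset Printing Implicit Defensive.
Import Order.TTheory GRing.Theory Num.Theory.
Import numFieldNormedType.Exports.
Local Open Scope classical_set_scope.
Local Open Scope ring_scope.

Section Defs.
Variable R : realType.

Definition ebasis n (i : 'I_n) : 'rV[R]_n := delta_mx 0 i.

Definition partial n (i : 'I_n) (f : 'rV[R]_n -> R) (x : 'rV[R]_n) : R :=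
  derive1 (fun t : R => f (x + t *: ebasis i)) 0.

Fixpoint iterpartial n (s : seq 'I_n) (f : 'rV[R]_n -> R) : 'rV[R]_n -> R :=
  match s with
  | [::] => f
  | i :: s' => partial i (iterpartial s' f)
  end.

Definition smooth_on n (U : set 'rV[R]_n) (f : 'rV[R]_n -> R) : Prop :=
  forall (s : seq 'I_n) (x : 'rV[R]_n), U x -> differentiable (iterpartial s f) x.

Definition C2_pos (F : R -> R) : Prop :=
  forall t : R, 0 < t ->
    [/\ derivable F t 1, derivable (derive1 F) t 1 & {for t, continuous (derive1n 2 F)}].

Definition mindex (d D : nat) := {ffun 'I_d -> 'I_D}.

Definition mperm d D (mu : mindex d D) (s : 'S_d) : mindex d D :=
  [ffun i => mu (s i)].

Definition is_volume_metric d D (M : set 'rV[R]_D)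
    (V : mindex d D -> mindex d D -> 'rV[R]_D -> R) : Prop :=
  [/\ (forall mu nu, smooth_on M (V mu nu)),
      (forall mu nu (s : 'S_d) x, V (mperm mu s) nu x = (-1) ^+ s * V mu nu x),
      (forall mu nu (s : 'S_d) x, V mu (mperm nu s) x = (-1) ^+ s * V mu nu x) &
      (forall mu nu x, V mu nu x = V nu mu x)].

(* sigma^{mu_1..mu_d} = eps^{a_1..a_d} p_{a_1 mu_1} ... p_{a_d mu_d},
   where p_{a mu} stands for d_a X^mu *)
Definition sigma_of d D (p : 'M[R]_(d, D)) (mu : mindex d D) : R :=
  \sum_(s : 'S_d) (-1) ^+ s * \prod_(i < d) p (s i) (mu i).

Definition gamma_of d D (V : mindex d D -> mindex d D -> 'rV[R]_D -> R)
    (x : 'rV[R]_D) (p : 'M[R]_(d, D)) : R :=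
  \sum_(mu : mindex d D) \sum_(nu : mindex d D)
     V mu nu x * sigma_of p mu * sigma_of p nu.

Definition dX d D (X : 'rV[R]_d -> 'rV[R]_D) (xi : 'rV[R]_d) : 'M[R]_(d, D) :=
  \matrix_(a < d, mu < D) partial a (fun eta => X eta 0 mu) xi.

Definition gamma_v d D (V : mindex d D -> mindex d D -> 'rV[R]_D -> R)
    (X : 'rV[R]_d -> 'rV[R]_D) (xi : 'rV[R]_d) : R :=
  gamma_of V (X xi) (dX X xi).

Definition lagr d D (F : R -> R) (V : mindex d D -> mindex d D -> 'rV[R]_D -> R)
    (x : 'rV[R]_D) (p : 'M[R]_(d, D)) : R := F (gamma_of V x p).

Definition dL_dX d D (L : 'rV[R]_D -> 'M[R]_(d, D) -> R) (alpha : 'I_D)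
    (x : 'rV[R]_D) (p : 'M[R]_(d, D)) : R :=
  derive1 (fun t : R => L (x + t *: ebasis alpha) p) 0.

Definition dL_ddX d D (L : 'rV[R]_D -> 'M[R]_(d, D) -> R) (a : 'I_d) (alpha : 'I_D)
    (x : 'rV[R]_D) (p : 'M[R]_(d, D)) : R :=
  derive1 (fun t : R => L x (p + t *: delta_mx a alpha)) 0.

Definition euler_lagrange d D (F : R -> R)
    (V : mindex d D -> mindex d D -> 'rV[R]_D -> R)
    (X : 'rV[R]_d -> 'rV[R]_D) (Sigma : set 'rV[R]_d) : Prop :=
  forall (xi : 'rV[R]_d) (alpha : 'I_D), Sigma xi ->
    dL_dX (lagr F V) alpha (X xi) (dX X xi)
    - \sum_(a < d) partial a (fun eta => dL_ddX (lagr F V) a alpha (X eta) (dX X eta)) xi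
    = 0.

End Defs.

From HB Require Import structures.
From mathcomp Require Import all_boot all_order all_algebra all_fingroup.
From mathcomp Require Import all_classical all_reals all_analysis.
From mathcomp Require Import ring lra.
Import Order.TTheory GRing.Theory Num.Theory.
Import numFieldNormedType.Exports.
Local Open Scope classical_set_scope.
Local Open Scope ring_scope.

(* Contracting the Euler-Lagrange equations with [p_{b alpha} = d_b X^alpha]
   (the Noether identity for translations of Sigma) leaves only
   [d_b gamma_v (F'(gamma_v) + 2 gamma_v F''(gamma_v))]; two facts make all
   other terms cancel.  First, [sigma^mu] is the minor of the Jacobian [p] on
   the columns [mu], hence linear in each row of [p], so [gamma] satisfies the
   Euler relation [sum_alpha p_{b alpha} dgamma/dp_{a alpha} = 2 delta_{ab} gamma];
   its [d_a]-derivative is compared with the chain rule for [d_b gamma_v].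
   Second, [d_a p_{b alpha} = d_b p_{a alpha}] by the symmetry of second
   derivatives, proved from the differentiability of the first partials alone
   (Young's form of Schwarz's theorem). *)

Section derive_line.
Context {R : realType} {V W : normedModType R}.
Implicit Types (f : V -> W) (x v : V) (s : R).

Let line_quotientE f x v s :
  (fun h : R => h^-1 *: (((fun t : R => f (x + t *: v)) \o shift s) (h *: 1)
       - f (x + s *: v))) =
  (fun h : R => h^-1 *: ((f \o shift (x + s *: v)) (h *: v) - f (x + s *: v))).
Proof.
apply/funext => h /=; congr (_ *: (f _ - _)).
by rewrite /shift /= [h *: 1]mulr1 scalerDl addrCA addrC.
Qed.

Lemma derivable_line f x v s :
  derivable (fun t : R => f (x + t *: v)) s 1 <-> derivable f (x + s *: v) v.
Proof. by rewrite /derivable line_quotientE. Qed.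

Lemma derive_line f x v s :
  'D_1 (fun t : R => f (x + t *: v)) s = 'D_v f (x + s *: v).
Proof. by rewrite /derive line_quotientE. Qed.

Lemma is_derive_line_comp f x v s : derivable f (x + s *: v) v ->
  is_derive s 1 (fun t : R => f (x + t *: v)) ('D_v f (x + s *: v)).
Proof. by move=> df; split; [exact/derivable_line | exact: derive_line]. Qed.

Lemma derivable_line0 f x v :
  derivable (fun t : R => f (x + t *: v)) 0 1 <-> derivable f x v.
Proof. by rewrite derivable_line scale0r addr0. Qed.

Lemma derive_line0 f x v : 'D_1 (fun t : R => f (x + t *: v)) 0 = 'D_v f x.
Proof. by rewrite derive_line scale0r addr0. Qed.

End derive_line.

Lemma partialE {R : realType} n (i : 'I_n) (f : 'rV[R]_n -> R) x :
  partial i f x = 'D_(ebasis R i) f x.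
Proof. by rewrite /partial derive1E derive_line0. Qed.

Section chain_rule.
Context {R : realType} {U V W : normedModType R}.

Lemma is_derive_comp (f : U -> W) (u : V -> U) x v :
  derivable u x v -> differentiable f (u x) ->
  is_derive x v (f \o u) ('d f (u x) ('D_v u x)).
Proof.
move=> du df; pose w t := u (x + t *: v).
have w0 : w 0 = u x by rewrite /w scale0r addr0.
have dw : differentiable w 0 by apply/derivable1_diffP/derivable_line0.
have dfw : differentiable (f \o w) 0 by apply: differentiable_comp; rewrite ?w0.
split; first exact/(derivable_line0 (f \o u) x v).1/derivable1_diffP.
rewrite -(derive_line0 (f \o u)) -/(f \o w) (deriveE _ dfw) diff_comp ?w0 //=.
by rewrite -(deriveE _ dw) derive_line0.
Qed.

End chain_rule.

Section derive_sums_products.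
Context {R : realType} {V W : normedModType R} {I : Type}.
Variables (r : seq I) (x v : V).

Lemma is_derive_big (f : I -> V -> W) (df : I -> W) :
  (forall i, is_derive x v (f i) (df i)) ->
  is_derive x v (fun y => \sum_(i <- r) f i y) (\sum_(i <- r) df i).
Proof.
move=> fdf; rewrite -fct_sumE; elim/big_ind2: _ => // [|? ? ? ? ? ?].
  exact: is_derive_cst.
exact: is_deriveD.
Qed.

Lemma derivable_big (f : I -> V -> W) :
  (forall i, derivable (f i) x v) -> derivable (fun y => \sum_(i <- r) f i y) x v.
Proof. by move=> fd; have [] := is_derive_big _ _ (fun i => derivableP (fd i)). Qed.

Lemma differentiable_big_sum (f : I -> V -> W) :
  (forall i, differentiable (f i) x) ->
  differentiable (fun y => \sum_(i <- r) f i y) x.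
Proof.
move=> fd; rewrite -fct_sumE; elim/big_ind: _ => // g h; exact: differentiableD.
Qed.

Lemma differentiable_big_prod (f : I -> V -> R) :
  (forall i, differentiable (f i) x) ->
  differentiable (fun y => \prod_(i <- r) f i y) x.
Proof.
move=> fd; rewrite -fct_prodE; elim/big_ind: _ => // g h; exact: differentiableM.
Qed.

End derive_sums_products.

Arguments is_derive_big {R V W I r x v f df}.

(* [is_deriveM] with the product written pointwise, as it appears in goals. *)
Lemma is_derive_mul {R : realType} {V : normedModType R} (f g : V -> R) x v df dg :
  is_derive x v f df -> is_derive x v g dg ->
  is_derive x v (fun y => f y * g y) (f x * dg + g x * df).
Proof. exact: is_deriveM. Qed.

Arguments is_derive_mul {R V f g x v df dg}.

Section chain_rule_matrix.
Context {R : realType} {V : normedModType R} {m n : nat}.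

Lemma diff_mxE (f : 'M[R]_(m, n) -> R) y A : differentiable f y ->
  'd f y A = \sum_i \sum_j A i j * 'D_(delta_mx i j) f y.
Proof.
move=> df; rewrite {1}(matrix_sum_delta A) !linear_sum; apply: eq_bigr => i _.
by rewrite linear_sum; apply: eq_bigr => j _; rewrite linearZ (deriveE _ df).
Qed.

Lemma is_derive_comp_mx (f : 'M[R]_(m, n) -> R) (u : V -> 'M[R]_(m, n)) x v :
  derivable u x v -> differentiable f (u x) ->
  is_derive x v (fun y => f (u y))
    (\sum_i \sum_j 'D_v u x i j * 'D_(delta_mx i j) f (u x)).
Proof.
move=> du df; have [? Dfu] := is_derive_comp f u x v du df.
by split; rewrite // -?diff_mxE // -Dfu.
Qed.

End chain_rule_matrix.

Lemma is_derive_line {R : realType} {V : normedModType R} (x v : V) :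
  is_derive (0 : R) 1 (fun t : R => x + t *: v) v.
Proof.
split; first exact/(derivable_line0 id x v).2/derivable_id.
by rewrite (derive_line0 id) derive_id.
Qed.

Lemma is_derive_comp_rV {R : realType} {V : normedModType R} {n : nat}
    (f : 'rV[R]_n -> R) (u : V -> 'rV[R]_n) x v :
  derivable u x v -> differentiable f (u x) ->
  is_derive x v (fun y => f (u y))
    (\sum_j 'D_v u x 0 j * 'D_(ebasis R j) f (u x)).
Proof. by move=> du df; have := is_derive_comp_mx f u x v du df; rewrite big_ord1. Qed.

Section schwarz.
Context {R : realType} {n : nat}.
Implicit Types (f : 'rV[R]_n -> R) (x : 'rV[R]_n) (i j : 'I_n).

Lemma differentiable_increment_le {V : normedModType R} (g : V -> R) (x : V) :
  differentiable g x -> forall eps, 0 < eps -> exists2 del, 0 < del &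
    forall w1 w2, `|w1| < del -> `|w2| < del ->
      `|g (x + w1) - g (x + w2) - 'd g x (w1 - w2)| <= eps * (`|w1| + `|w2|).
Proof.
move=> dg eps eps0.
have /eqaddoP/(_ eps eps0)/nbhs_norm0P[del del0 Hdel] := diff_locally dg.
have rem w : `|w| < del -> `|g (x + w) - g x - 'd g x w| <= eps * `|w|.
  move=> /Hdel; rewrite -[X in `|X|]/(g (w + x) - (g x + 'd g x w)).
  by rewrite (addrC w) opprD addrA.
exists del => // w1 w2 /rem r1 /rem r2; rewrite linearB /= mulrDr.
have -> : g (x + w1) - g (x + w2) - ('d g x w1 - 'd g x w2) =
    (g (x + w1) - g x - 'd g x w1) - (g (x + w2) - g x - 'd g x w2) by ring.
exact: le_trans (ler_normB _ _) (lerD r1 r2).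
Qed.

Definition second_difference f x i j (h : R) :=
  f (x + h *: ebasis R i + h *: ebasis R j) - f (x + h *: ebasis R i)
  - f (x + h *: ebasis R j) + f x.

Lemma second_differenceC f x i j h :
  second_difference f x j i h = second_difference f x i j h.
Proof. by rewrite /second_difference (addrAC x (h *: ebasis R j)); ring. Qed.

Lemma second_difference_mvt f x i j h : 0 < h ->
  (forall s, 0 <= s <= h -> differentiable f (x + s *: ebasis R i) /\
                            differentiable f (x + h *: ebasis R j + s *: ebasis R i)) ->
  exists2 c, 0 < c < h & second_difference f x i j h =
    h * (partial i f (x + h *: ebasis R j + c *: ebasis R i) - partial i f (x + c *: ebasis R i)).
Proof.
move=> h0 df; set ei := ebasis R i; set y := x + h *: ebasis R j.
pose phi s := f (y + s *: ei) - f (x + s *: ei).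
have Dphi s : 0 <= s <= h ->
    is_derive s 1 phi (partial i f (y + s *: ei) - partial i f (x + s *: ei)).
  move=> /df[dfx dfy]; rewrite !partialE; apply: is_deriveB;
  by apply: is_derive_line_comp; exact: diff_derivable.
have Dphi_in s : s \in `]0, h[ ->
    is_derive s 1 phi (partial i f (y + s *: ei) - partial i f (x + s *: ei)).
  by rewrite in_itv /= => /andP[/ltW s0 /ltW sh]; apply: Dphi; rewrite s0 sh.
have cphi : {within `[0, h], continuous phi}.
  apply: continuous_in_subspaceT => s /set_mem /=; rewrite in_itv /= => /Dphi[dphi _].
  exact/differentiable_continuous/derivable1_diffP.
have [c c_in Ec] := MVT h0 Dphi_in cphi.
move: c_in; rewrite in_itv /= => c_in; exists c => //.
rewrite subr0 in Ec; rewrite mulrC -Ec /phi /second_difference /y /ei !scale0r !addr0.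
by rewrite (addrAC x (h *: ebasis R j)); ring.
Qed.

Lemma second_difference_approx (S : set 'rV[R]_n) f x i j :
  open S -> S x -> (forall y, S y -> differentiable f y) ->
  differentiable (partial i f) x ->
  forall eps, 0 < eps -> exists2 del, 0 < del & forall h, 0 < h < del ->
    `|second_difference f x i j h - h ^+ 2 * partial j (partial i f) x| <= eps * h ^+ 2.
Proof.
(* By the MVT along [e_i], the second difference is [h] times an increment of
   [d_i f] between two points [h e_j] apart, near [x]; differentiability of
   [d_i f] at [x] makes it [h ^+ 2 * d_j d_i f x] up to [o(h ^+ 2)]. *)
move=> oS Sx dfS dgi eps eps0.
set ei := ebasis R i; set ej := ebasis R j; set gi := partial i f.
set A := `|ei| + `|ej| + 1; have A0 : 0 < A by rewrite ltr_wpDl ?addr_ge0.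
have /nbhs_normP[r r0 rS] : nbhs x S by apply: open_nbhs_nbhs.
have e0 : 0 < eps / (2 * A) by rewrite divr_gt0 // mulr_gt0.
have [r' r'0 Hgi] := differentiable_increment_le _ _ dgi _ e0.
exists (Num.min r r' / A) => [|h /andP[h0]]; first by rewrite divr_gt0 // lt_min r0.
rewrite ltr_pdivlMr // lt_min => /andP[hAr hAr'].
have small s t : 0 <= s <= h -> 0 <= t <= h -> `|s *: ei + t *: ej| < h * A.
  move=> /andP[s0 sh] /andP[t0 th]; rewrite (le_lt_trans (ler_normD _ _)) //.
  rewrite !normrZ !ger0_norm // /A mulrDr mulr1 ltr_pwDr //.
  by rewrite mulrDr lerD // ler_wpM2r.
have inS s t : 0 <= s <= h -> 0 <= t <= h -> S (x + (s *: ei + t *: ej)).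
  move=> sh th; apply: rS; rewrite /ball_ /= opprD addrA subrr sub0r normrN.
  exact: lt_trans (small s t sh th) hAr.
have hI : 0 <= h <= h by rewrite (ltW h0) lexx.
have zI : 0 <= (0 : R) <= h by rewrite lexx (ltW h0).
have [c cI ->] : exists2 c, 0 < c < h & second_difference f x i j h =
    h * (gi (x + h *: ej + c *: ei) - gi (x + c *: ei)).
  apply: second_difference_mvt => // s sh; split; apply: dfS.
    by have := inS s 0 sh zI; rewrite scale0r addr0.
  by have := inS s h sh hI; rewrite addrA (addrAC x).
have {}cI : 0 <= c <= h by case/andP: cI => /ltW -> /ltW ->.
have N1 := small c h cI hI; have N2 := small c 0 cI zI; rewrite scale0r addr0 in N2.
have dw : c *: ei + h *: ej - c *: ei = h *: ej by rewrite addrC addKr.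
have := Hgi _ _ (lt_trans N1 hAr') (lt_trans N2 hAr').
rewrite dw linearZZ -(deriveE _ dgi) -partialE => B.
have -> : h * (gi (x + h *: ej + c *: ei) - gi (x + c *: ei)) - h ^+ 2 * partial j gi x
    = h * (gi (x + (c *: ei + h *: ej)) - gi (x + c *: ei) - h * partial j gi x).
  by rewrite -addrA (addrC (h *: ej)); ring.
rewrite normrM gtr0_norm //; apply: le_trans (ler_wpM2l (ltW h0) B) _.
have NB : `|c *: ei + h *: ej| + `|c *: ei| <= 2 * (h * A).
  by rewrite mulr2n mulrDl mul1r lerD ?ltW.
have E : eps / (2 * A) * (2 * A) * h ^+ 2 = eps * h ^+ 2.
  by rewrite divfK // gt_eqF // mulr_gt0.
rewrite -E; have := ler_wpM2l (ltW h0) (ler_wpM2l (ltW e0) NB); lra.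
Qed.

Lemma partialC (S : set 'rV[R]_n) f x i j :
  open S -> S x -> (forall y, S y -> differentiable f y) ->
  differentiable (partial i f) x -> differentiable (partial j f) x ->
  partial j (partial i f) x = partial i (partial j f) x.
Proof.
move=> oS Sx dfS di dj; apply/eqP; rewrite -subr_eq0 -normr_le0.
apply/ler_addgt0Pr => eps eps0; rewrite add0r.
have eps20 : 0 < eps / 2 by rewrite divr_gt0.
have [ri ri0 Hi] := second_difference_approx _ _ _ i j oS Sx dfS di _ eps20.
have [rj rj0 Hj] := second_difference_approx _ _ _ j i oS Sx dfS dj _ eps20.
have m0 : 0 < Num.min ri rj by rewrite lt_min ri0 rj0.
set h := Num.min ri rj / 2.
have h0 : 0 < h by rewrite divr_gt0.
have hm : h < Num.min ri rj by rewrite ltr_pdivrMr // ltr_pMr // ltr1n.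
have /Hi Ai : 0 < h < ri by rewrite h0 (lt_le_trans hm) // ge_min lexx.
have /Hj Aj : 0 < h < rj by rewrite h0 (lt_le_trans hm) // ge_min lexx orbT.
rewrite second_differenceC in Aj; move: Ai Aj.
move: (second_difference f x i j h) (partial j (partial i f) x) (partial i (partial j f) x).
move=> sd a b Ai Aj; have h20 : 0 < h ^+ 2 by rewrite exprn_gt0.
rewrite -(ler_pM2l h20) -[X in X * _]gtr0_norm // -normrM.
have -> : h ^+ 2 * (a - b) = (sd - h ^+ 2 * b) - (sd - h ^+ 2 * a) by ring.
by apply: le_trans (ler_normB _ _) _; lra.
Qed.

End schwarz.

Lemma sum_delta_mx {R : pzSemiRingType} {m n} (a : 'I_m) (b : 'I_n)
    (f : 'I_m -> 'I_n -> R) :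
  \sum_i \sum_j delta_mx a b i j * f i j = f a b.
Proof.
rewrite (bigD1 a) //= [X in _ + X]big1 => [|i /negbTE ai]; last first.
  by apply: big1 => j _; rewrite mxE ai mul0r.
rewrite addr0 (bigD1 b) //= [X in _ + X]big1 => [|j /negbTE bj]; last first.
  by rewrite mxE eqxx bj mul0r.
by rewrite mxE !eqxx mul1r addr0.
Qed.

Lemma sum_ebasis {R : realType} n (b : 'I_n) (f : 'I_n -> R) :
  \sum_j ebasis R b 0 j * f j = f b.
Proof. by rewrite -(sum_delta_mx (0 : 'I_1) b (fun _ j => f j)) big_ord1. Qed.

Section sigma_algebra.
Context {R : realType} {d D : nat}.
Implicit Types (p : 'M[R]_(d, D)) (mu : mindex d D).

Definition sigma_mx p mu : 'M[R]_d := \matrix_(i, j) p i (mu j).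

Definition set_row p (a : 'I_d) (w : 'rV[R]_D) : 'M[R]_(d, D) :=
  \matrix_(i, j) if i == a then w 0 j else p i j.

(* [sigma] is linear in row [a], so [d sigma / d p_{a al}] is [sigma] with that
   row replaced by [e_al] (see [sigma_add_delta]). *)
Definition dsigma (a : 'I_d) (al : 'I_D) p mu := sigma_of (set_row p a (ebasis R al)) mu.

Lemma sigma_ofE p mu : sigma_of p mu = \det (sigma_mx p mu).
Proof.
rewrite -det_tr; apply: eq_bigr => s _; congr (_ * _).
by apply: eq_bigr => i _; rewrite !mxE.
Qed.

Lemma sigma_set_row p a w mu :
  sigma_of (set_row p a w) mu = \sum_j w 0 (mu j) * cofactor (sigma_mx p mu) a j.
Proof.
rewrite sigma_ofE (expand_det_row _ a); apply: eq_bigr => j _.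
congr (_ * _); first by rewrite !mxE eqxx.
congr (_ * \det _); apply/matrixP => k l.
by rewrite !mxE eq_sym (negbTE (neq_lift a k)).
Qed.

Lemma set_row_id p a : set_row p a (row a p) = p.
Proof. by apply/matrixP => i j; rewrite !mxE; case: eqP => [->|]. Qed.

Lemma sigma_expand_row p a mu :
  sigma_of p mu = \sum_j p a (mu j) * cofactor (sigma_mx p mu) a j.
Proof.
by rewrite -{1}(set_row_id p a) sigma_set_row; apply: eq_bigr => j _; rewrite mxE.
Qed.

Lemma sigma_set_row_dup p a b mu : a != b -> sigma_of (set_row p a (row b p)) mu = 0.
Proof.
move=> ab; rewrite sigma_ofE; apply: (determinant_alternate ab) => j.
by rewrite !mxE eqxx eq_sym (negbTE ab).
Qed.

Lemma sigma_add_delta p a al t mu :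
  sigma_of (p + t *: delta_mx a al) mu = sigma_of p mu + t * dsigma a al p mu.
Proof.
have -> : p + t *: delta_mx a al = set_row p a (row a p + t *: ebasis R al).
  apply/matrixP => i j; rewrite !mxE; case: eqP => [->|_]; first by rewrite eqxx.
  by rewrite mulr0 addr0.
rewrite /dsigma !sigma_set_row (sigma_expand_row p a) mulr_sumr -big_split.
by apply: eq_bigr => j _; rewrite !mxE mulrDl mulrA.
Qed.

Lemma sum_row_dsigma p a b mu :
  \sum_al p b al * dsigma a al p mu = (a == b)%:R * sigma_of p mu.
Proof.
have -> : \sum_al p b al * dsigma a al p mu = sigma_of (set_row p a (row b p)) mu.
  rewrite sigma_set_row /dsigma; under eq_bigr do rewrite sigma_set_row mulr_sumr.
  rewrite exchange_big; apply: eq_bigr => j _ /=.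
  rewrite (bigD1 (mu j)) //= big1 => [|al /negbTE al_mu].
    by rewrite !mxE !eqxx mul1r addr0.
  by rewrite !mxE eqxx eq_sym al_mu mul0r mulr0.
by case: eqP => [<-|/eqP ab]; rewrite ?set_row_id ?mul1r // sigma_set_row_dup // mul0r.
Qed.

End sigma_algebra.

Section gamma_algebra.
Context {R : realType} {d D : nat}.
Variable V : mindex d D -> mindex d D -> 'rV[R]_D -> R.
Implicit Types (x : 'rV[R]_D) (p : 'M[R]_(d, D)).

Definition dgamma_dx (al : 'I_D) x p := \sum_mu \sum_nu
  'D_(ebasis R al) (V mu nu) x * sigma_of p mu * sigma_of p nu.

Definition dgamma_dp (a : 'I_d) (al : 'I_D) x p := \sum_mu \sum_nu V mu nu x *
  (dsigma a al p mu * sigma_of p nu + sigma_of p mu * dsigma a al p nu).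

Lemma sum_row_dgamma_dp x p a b :
  \sum_al p b al * dgamma_dp a al x p = 2 * (a == b)%:R * gamma_of V x p.
Proof.
rewrite /dgamma_dp /gamma_of.
under eq_bigr do rewrite mulr_sumr.
rewrite exchange_big mulr_sumr; apply: eq_bigr => mu _.
under eq_bigr do rewrite mulr_sumr.
rewrite exchange_big mulr_sumr; apply: eq_bigr => nu _ /=.
transitivity (V mu nu x * (sigma_of p nu * \sum_al p b al * dsigma a al p mu
                          + sigma_of p mu * \sum_al p b al * dsigma a al p nu)).
  rewrite !mulr_sumr -big_split mulr_sumr; apply: eq_bigr => al _ /=; ring.
by rewrite !sum_row_dsigma; ring.
Qed.

End gamma_algebra.

Section sigma_calculus.
Context {R : realType} {d D : nat}.
Implicit Types (p : 'M[R]_(d, D)) (mu : mindex d D).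

Lemma differentiable_sigma {U : normedModType R} (u : U -> 'M[R]_(d, D)) y mu :
  (forall i j, differentiable (fun z => u z i j) y) ->
  differentiable (fun z => sigma_of (u z) mu) y.
Proof.
move=> du; apply: differentiable_big_sum => s.
by apply: differentiableM; [exact: differentiable_cst | exact: differentiable_big_prod].
Qed.

Lemma differentiable_sigma_of p mu : differentiable (fun q => sigma_of q mu) p.
Proof. by apply: (differentiable_sigma id) => i j; exact: differentiable_coord. Qed.

Lemma differentiable_dsigma a al p mu : differentiable (fun q => dsigma a al q mu) p.
Proof.
rewrite /dsigma; apply: (differentiable_sigma (fun q => set_row q a (ebasis R al))) => i j.
under [fun z => _]funext => z do rewrite mxE.
by case: (i == a); [exact: differentiable_cst | exact: differentiable_coord].
Qed.

Lemma derive_sigma_delta p a al mu :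
  'D_(delta_mx a al) (fun q => sigma_of q mu) p = dsigma a al p mu.
Proof.
rewrite -derive_line0; under [fun t => _]funext => t do rewrite sigma_add_delta.
by have [] := is_derive_line (sigma_of p mu) (dsigma a al p mu).
Qed.

Context {U : normedModType R}.

Lemma is_derive_sigma_comp (q : U -> 'M[R]_(d, D)) y v mu : derivable q y v ->
  is_derive y v (fun z => sigma_of (q z) mu)
    (\sum_c \sum_al 'D_v q y c al * dsigma c al (q y) mu).
Proof.
move=> dq; have := is_derive_comp_mx _ _ _ _ dq (differentiable_sigma_of (q y) mu).
by under eq_bigr do under eq_bigr do rewrite derive_sigma_delta.
Qed.

Lemma derivable_dsigma_comp (q : U -> 'M[R]_(d, D)) y v a al mu : derivable q y v ->
  derivable (fun z => dsigma a al (q z) mu) y v.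
Proof.
by move=> dq; have [] := is_derive_comp_mx _ _ _ _ dq (differentiable_dsigma a al (q y) mu).
Qed.

End sigma_calculus.

Section gamma_calculus.
Context {R : realType} {d D : nat} {U : normedModType R}.
Variable V : mindex d D -> mindex d D -> 'rV[R]_D -> R.
Variables (u : U -> 'rV[R]_D) (q : U -> 'M[R]_(d, D)) (y v : U).
Hypotheses (du : derivable u y v) (dq : derivable q y v)
  (dV : forall mu nu, differentiable (V mu nu) (u y)).

Let exchange_big3 (I J K : finType) (f : I -> J -> K -> R) :
  \sum_i \sum_j \sum_k f i j k = \sum_j \sum_k \sum_i f i j k.
Proof. by rewrite exchange_big; apply: eq_bigr => j _; rewrite exchange_big. Qed.

Lemma is_derive_gamma_comp :
  is_derive y v (fun z => gamma_of V (u z) (q z))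
    (\sum_al 'D_v u y 0 al * dgamma_dx V al (u y) (q y)
     + \sum_c \sum_al 'D_v q y c al * dgamma_dp V c al (u y) (q y)).
Proof.
pose Dsigma mu := \sum_c \sum_al 'D_v q y c al * dsigma c al (q y) mu.
pose DV mu nu := \sum_al 'D_v u y 0 al * 'D_(ebasis R al) (V mu nu) (u y).
have Dterm mu nu :
    is_derive y v (fun z => V mu nu (u z) * sigma_of (q z) mu * sigma_of (q z) nu)
      (DV mu nu * sigma_of (q y) mu * sigma_of (q y) nu
       + V mu nu (u y) * (Dsigma mu * sigma_of (q y) nu + sigma_of (q y) mu * Dsigma nu)).
  apply: is_derive_eq.
    apply: is_derive_mul; last exact: is_derive_sigma_comp.
    by apply: is_derive_mul; [exact: is_derive_comp_rV | exact: is_derive_sigma_comp].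
  by rewrite /Dsigma /DV; ring.
apply: is_derive_eq; first exact: is_derive_big (fun mu => is_derive_big (Dterm mu)).
have Ex : \sum_al 'D_v u y 0 al * dgamma_dx V al (u y) (q y)
    = \sum_mu \sum_nu DV mu nu * sigma_of (q y) mu * sigma_of (q y) nu.
  rewrite /dgamma_dx; under eq_bigr do rewrite mulr_sumr.
  under eq_bigr do under eq_bigr do rewrite mulr_sumr.
  rewrite exchange_big3; apply: eq_bigr => mu _; apply: eq_bigr => nu _.
  by rewrite !mulr_suml; apply: eq_bigr => al _; ring.
have Ep : \sum_c \sum_al 'D_v q y c al * dgamma_dp V c al (u y) (q y)
    = \sum_mu \sum_nu V mu nu (u y) *
        (Dsigma mu * sigma_of (q y) nu + sigma_of (q y) mu * Dsigma nu).
  rewrite /dgamma_dp; under eq_bigr do under eq_bigr do rewrite mulr_sumr.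
  under eq_bigr do under eq_bigr do under eq_bigr do rewrite mulr_sumr.
  under eq_bigr do rewrite exchange_big3.
  rewrite exchange_big3; apply: eq_bigr => mu _; apply: eq_bigr => nu _.
  rewrite mulr_suml mulr_sumr -big_split mulr_sumr; apply: eq_bigr => c _ /=.
  rewrite mulr_suml mulr_sumr -big_split mulr_sumr; apply: eq_bigr => al _ /=.
  ring.
by rewrite Ex Ep -big_split; apply: eq_bigr => mu _; rewrite -big_split.
Qed.

Lemma derivable_dgamma_dp_comp a al :
  derivable (fun z => dgamma_dp V a al (u z) (q z)) y v.
Proof.
have dsigma_q mu : derivable (fun z => sigma_of (q z) mu) y v.
  by have [] := is_derive_sigma_comp q y v mu dq.
apply: derivable_big => mu; apply: derivable_big => nu; apply: derivableM.
  by have [] := is_derive_comp_rV (V mu nu) u y v du (dV mu nu).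
exact: derivableD (derivableM (derivable_dsigma_comp _ _ _ _ _ _ dq) (dsigma_q nu))
                  (derivableM (dsigma_q mu) (derivable_dsigma_comp _ _ _ _ _ _ dq)).
Qed.

End gamma_calculus.

Section lagrangian.
Context {R : realType} {d D : nat}.
Variables (V : mindex d D -> mindex d D -> 'rV[R]_D -> R) (F : R -> R).
Variables (x : 'rV[R]_D) (p : 'M[R]_(d, D)).
Hypotheses (dV : forall mu nu, differentiable (V mu nu) x)
  (dF : derivable F (gamma_of V x p) 1).

Let derive1_lagr_line (w : 'rV[R]_D) (A : 'M[R]_(d, D)) :
  derive1 (fun t : R => lagr F V (x + t *: w) (p + t *: A)) 0 =
  derive1 F (gamma_of V x p) *
    (\sum_al w 0 al * dgamma_dx V al x p + \sum_c \sum_al A c al * dgamma_dp V c al x p).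
Proof.
have [dw Dw] := is_derive_line x w; have [dA DA] := is_derive_line p A.
have dV0 mu nu : differentiable (V mu nu) (x + 0 *: w) by rewrite scale0r addr0.
have [dg] := is_derive_gamma_comp V _ _ _ _ dw dA dV0.
rewrite Dw DA !scale0r !addr0 => Dg.
have dF0 : derivable F (gamma_of V (x + 0 *: w) (p + 0 *: A)) 1 by rewrite !scale0r !addr0.
rewrite /lagr -[fun t => _]/(F \o fun t => gamma_of V (x + t *: w) (p + t *: A)).
rewrite -derive1E in Dg.
by rewrite derive1_comp // Dg !scale0r !addr0.
Qed.

Lemma dL_dX_lagr al :
  dL_dX (lagr F V) al x p = derive1 F (gamma_of V x p) * dgamma_dx V al x p.
Proof.
transitivity (derive1 (fun t => lagr F V (x + t *: ebasis R al) (p + t *: 0)) 0).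
  by congr derive1; apply/funext => t; rewrite scaler0 addr0.
rewrite derive1_lagr_line sum_ebasis [X in _ + X]big1 ?addr0 // => c _.
by apply: big1 => b _; rewrite mxE mul0r.
Qed.

Lemma dL_ddX_lagr a al :
  dL_ddX (lagr F V) a al x p = derive1 F (gamma_of V x p) * dgamma_dp V a al x p.
Proof.
transitivity (derive1 (fun t => lagr F V (x + t *: 0) (p + t *: delta_mx a al)) 0).
  by congr derive1; apply/funext => t; rewrite scaler0 addr0.
by rewrite derive1_lagr_line sum_delta_mx big1 ?add0r // => b _; rewrite mxE mul0r.
Qed.

End lagrangian.

(* The contracted Euler-Lagrange equation at a point, with [w al = p_{b al}],
   [G al = dgamma/dX^al], [H a al = dgamma/dp_{a al}], [dH a al = d_a H_{a al}],
   [dp a c al = d_a p_{c al}], [dg a = d_a gamma_v], [F1 = F'(gamma_v)] and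
   [F2 = F''(gamma_v)]. *)
Section contraction_algebra.
Context {R : comPzRingType} {n m : nat}.
Variables (b : 'I_n) (w G : 'I_m -> R) (H dH : 'I_n -> 'I_m -> R).
Variables (dp : 'I_n -> 'I_n -> 'I_m -> R) (dg : 'I_n -> R) (g F1 F2 : R).

Let sum_kronecker (f : 'I_n -> R) : \sum_a (a == b)%:R * f a = f b.
Proof.
by rewrite (bigD1 b) //= eqxx mul1r big1 ?addr0 // => a /negbTE ->; rewrite mul0r.
Qed.

Lemma euler_lagrange_contraction :
  (forall al, F1 * G al = \sum_a (F1 * dH a al + H a al * (F2 * dg a))) ->
  (forall a, \sum_al w al * H a al = 2 * (a == b)%:R * g) ->
  (forall a, \sum_al (w al * dH a al + H a al * dp a b al) = 2 * (a == b)%:R * dg a) ->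
  dg b = \sum_al w al * G al + \sum_c \sum_al dp b c al * H c al ->
  (forall c al, dp b c al = dp c b al) ->
  dg b * (2 * g * F2 + F1) = 0.
Proof.
move=> EL hom dhom chain sym; set S := \sum_c \sum_al dp b c al * H c al.
have lhs : \sum_al w al * (F1 * G al) = F1 * (dg b - S).
  by rewrite chain addrK mulr_sumr; apply: eq_bigr => al _; ring.
have term a : \sum_al w al * (F1 * dH a al + H a al * (F2 * dg a)) =
    (a == b)%:R * (2 * F1 * dg a + 2 * F2 * g * dg a) - F1 * \sum_al H a al * dp a b al.
  transitivity (F1 * (\sum_al (w al * dH a al + H a al * dp a b al))
      - F1 * (\sum_al H a al * dp a b al) + F2 * dg a * (\sum_al w al * H a al)).
    by rewrite !mulr_sumr -sumrB -big_split; apply: eq_bigr => al _ /=; ring.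
  by rewrite dhom hom; ring.
have rhs : \sum_al w al * \sum_a (F1 * dH a al + H a al * (F2 * dg a)) =
    2 * F1 * dg b + 2 * F2 * g * dg b - F1 * S.
  under eq_bigr do rewrite mulr_sumr.
  rewrite exchange_big /=; under eq_bigr do rewrite term.
  rewrite sumrB sum_kronecker -mulr_sumr; congr (_ - F1 * _).
  by apply: eq_bigr => c _; apply: eq_bigr => al _; rewrite sym mulrC.
have E : F1 * (dg b - S) = 2 * F1 * dg b + 2 * F2 * g * dg b - F1 * S.
  by rewrite -lhs -rhs; apply: eq_bigr => al _; rewrite EL.
transitivity ((2 * F1 * dg b + 2 * F2 * g * dg b - F1 * S) - F1 * (dg b - S)); first ring.
by rewrite E subrr.
Qed.

End contraction_algebra.

Lemma dX_entryE {R : realType} {d D : nat} (X : 'rV[R]_d -> 'rV[R]_D) c al :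
  (fun e => dX X e c al) = partial c (fun e => X e 0 al).
Proof. by apply/funext => e; rewrite mxE. Qed.

Section euler_lagrange_identity.
Context {R : realType} {d D : nat}.
Variables (V : mindex d D -> mindex d D -> 'rV[R]_D -> R) (F : R -> R).
Variables (X : 'rV[R]_d -> 'rV[R]_D) (Sigma : set 'rV[R]_d).
Hypotheses (oSigma : open Sigma)
  (X_diff : forall eta al, Sigma eta -> differentiable (fun e => X e 0 al) eta)
  (dX_diff : forall eta c al, Sigma eta -> differentiable (fun e => dX X e c al) eta)
  (V_diff : forall eta mu nu, Sigma eta -> differentiable (V mu nu) (X eta))
  (F_der : forall eta, Sigma eta -> derivable F (gamma_v V X eta) 1).
Variables (xi : 'rV[R]_d) (Sxi : Sigma xi).

Local Notation H a al := (fun e => dgamma_dp V a al (X e) (dX X e)).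

Lemma derivable_X eta v : Sigma eta -> derivable X eta v.
Proof.
by move=> Se; apply/derivable_mxP => i al; rewrite (ord1 i); exact/diff_derivable/X_diff.
Qed.

Lemma derivable_dX eta v : Sigma eta -> derivable (dX X) eta v.
Proof. by move=> Se; apply/derivable_mxP => c al; exact/diff_derivable/dX_diff. Qed.

Lemma derivable_dgamma_dp_X a al v : derivable (H a al) xi v.
Proof.
apply: derivable_dgamma_dp_comp; [exact: derivable_X | exact: derivable_dX |].
by move=> mu nu; exact: V_diff.
Qed.

Lemma partial_gamma_v b :
  partial b (gamma_v V X) xi =
    \sum_al dX X xi b al * dgamma_dx V al (X xi) (dX X xi)
    + \sum_c \sum_al partial b (fun e => dX X e c al) xi * H c al xi.
Proof.
rewrite partialE /gamma_v.
have [_ ->] := is_derive_gamma_comp V X (dX X) xi (ebasis R b)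
  (derivable_X _ _ Sxi) (derivable_dX _ _ Sxi) (fun mu nu => V_diff xi mu nu Sxi).
congr (_ + _); last first.
  apply: eq_bigr => c _; apply: eq_bigr => al _.
  by rewrite derive_mx ?mxE ?partialE //; exact: derivable_dX.
by apply: eq_bigr => al _; rewrite derive_mx ?mxE ?partialE //; exact: derivable_X.
Qed.

Lemma derivable_gamma_v v : derivable (gamma_v V X) xi v.
Proof.
by have [] := is_derive_gamma_comp V X (dX X) xi v
  (derivable_X _ _ Sxi) (derivable_dX _ _ Sxi) (fun mu nu => V_diff xi mu nu Sxi).
Qed.

Lemma partial_sum_row_dgamma_dp a b :
  \sum_al (dX X xi b al * partial a (H a al) xi
           + H a al xi * partial a (fun e => dX X e b al) xi)
  = 2 * (a == b)%:R * partial a (gamma_v V X) xi.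
Proof.
have Dterm al : is_derive xi (ebasis R a) (fun e => dX X e b al * H a al e)
    (dX X xi b al * partial a (H a al) xi + H a al xi * partial a (fun e => dX X e b al) xi).
  rewrite !partialE; apply: is_derive_mul; apply: derivableP.
    exact/diff_derivable/dX_diff.
  exact: derivable_dgamma_dp_X.
have hom : (fun e => \sum_al dX X e b al * H a al e)
    = (2 * (a == b)%:R) \*o gamma_v V X.
  by apply/funext => e; exact: sum_row_dgamma_dp.
transitivity ('D_(ebasis R a) (fun e => \sum_al dX X e b al * H a al e) xi).
  by have [_ ->] := is_derive_big (r := index_enum 'I_D) Dterm.
by rewrite hom deriveMl ?partialE //; exact: derivable_gamma_v.
Qed.

Lemma partial_dX_sym b c al :
  partial b (fun e => dX X e c al) xi = partial c (fun e => dX X e b al) xi.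
Proof.
rewrite !dX_entryE; apply: (partialC _ _ _ _ _ oSigma Sxi (fun y Sy => X_diff y al Sy));
by rewrite -dX_entryE; exact: dX_diff.
Qed.

Hypotheses (EL : euler_lagrange F V X Sigma)
  (dF1 : derivable (derive1 F) (gamma_v V X xi) 1).

Lemma euler_lagrange_at al :
  derive1 F (gamma_v V X xi) * dgamma_dx V al (X xi) (dX X xi) =
  \sum_a (derive1 F (gamma_v V X xi) * partial a (H a al) xi
          + H a al xi
            * (derive1 (derive1 F) (gamma_v V X xi) * partial a (gamma_v V X) xi)).
Proof.
have dV mu nu : differentiable (V mu nu) (X xi) := V_diff xi mu nu Sxi.
apply/eqP; rewrite -subr_eq0; apply/eqP; rewrite -[RHS](EL xi al Sxi).
rewrite (dL_dX_lagr V F (X xi) (dX X xi) dV (F_der xi Sxi)).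
congr (_ - _); apply: eq_bigr => a _.
have nearSigma : \forall e \near xi, dL_ddX (lagr F V) a al (X e) (dX X e)
    = derive1 F (gamma_v V X e) * H a al e.
  apply: filterS (open_nbhs_nbhs (conj oSigma Sxi)) => e Se.
  by rewrite (dL_ddX_lagr V F _ _ (fun mu nu => V_diff e mu nu Se) (F_der e Se)).
rewrite [RHS]partialE (near_eq_derive _ nearSigma).
have DF1 : is_derive xi (ebasis R a) (fun e => derive1 F (gamma_v V X e))
    (derive1 (derive1 F) (gamma_v V X xi) * partial a (gamma_v V X) xi).
  apply: is_derive_eq (is_derive_comp _ _ _ _ (derivable_gamma_v _) _) _.
    exact/derivable1_diffP.
  by rewrite deriv1E // partialE mulrC.
have DH : is_derive xi (ebasis R a) (H a al) (partial a (H a al) xi).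
  by rewrite partialE; apply: derivableP; exact: derivable_dgamma_dp_X.
by have [_ ->] := is_derive_mul DF1 DH.
Qed.

Lemma euler_lagrange_identity b :
  partial b (gamma_v V X) xi
    * (2 * gamma_v V X xi * derive1 (derive1 F) (gamma_v V X xi)
       + derive1 F (gamma_v V X xi)) = 0.
Proof.
apply: (euler_lagrange_contraction b (fun al => dX X xi b al)
  (fun al => dgamma_dx V al (X xi) (dX X xi)) (fun a al => H a al xi)
  (fun a al => partial a (H a al) xi) (fun a c al => partial a (fun e => dX X e c al) xi)
  (fun a => partial a (gamma_v V X) xi)).
- exact: euler_lagrange_at.
- by move=> a; exact: sum_row_dgamma_dp.
- by move=> a; exact: partial_sum_row_dgamma_dp.
- exact: partial_gamma_v.
- by move=> c al; exact: partial_dX_sym.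
Qed.

End euler_lagrange_identity.

Theorem mainTheorem3 (R : realType) (d D : nat)
  (Sigma : set 'rV[R]_d) (M : set 'rV[R]_D)
  (V : mindex d D -> mindex d D -> 'rV[R]_D -> R)
  (X : 'rV[R]_d -> 'rV[R]_D) (F : R -> R) :
  open Sigma -> open M ->
  is_volume_metric M V ->
  (forall xi, Sigma xi -> M (X xi)) ->
  (forall mu : 'I_D, smooth_on Sigma (fun xi => X xi 0 mu)) ->
  (forall xi, Sigma xi -> 0 < gamma_v V X xi) ->
  C2_pos F ->
  euler_lagrange F V X Sigma ->
  forall (xi : 'rV[R]_d) (b : 'I_d), Sigma xi ->
    partial b (gamma_v V X) xi
      * (2 * gamma_v V X xi * derive1n 2 F (gamma_v V X xi)
         + derive1 F (gamma_v V X xi)) = 0.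
Proof.
move=> oSigma _ [V_smooth _ _ _] XM X_smooth gamma_pos F_C2 EL xi b Sxi.
have X_diff eta al : Sigma eta -> differentiable (fun e => X e 0 al) eta.
  exact: X_smooth al [::] eta.
have dX_diff eta c al : Sigma eta -> differentiable (fun e => dX X e c al) eta.
  by rewrite dX_entryE; exact: X_smooth al [:: c] eta.
have V_diff eta mu nu : Sigma eta -> differentiable (V mu nu) (X eta).
  by move=> /XM; exact: V_smooth mu nu [::] (X eta).
have F_der eta : Sigma eta -> derivable F (gamma_v V X eta) 1.
  by move=> /gamma_pos/F_C2[].
have dF1 : derivable (derive1 F) (gamma_v V X xi) 1.
  by have [] := F_C2 _ (gamma_pos xi Sxi).
exact: (euler_lagrange_identity V F X Sigma oSigma
          X_diff dX_diff V_diff F_der xi Sxi EL dF1 b).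
Qed.
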